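(* For every $n$ and any $(\hat\imath,\hat\jmath)\in\mathcal E$ with associated matrices $B^n_1,B^n_2$, $$\inf_{u^s\in\Delta_J}\Big(1+\big\langle e,(B^n_1)^{-1}B^n_2u^s\big\rangle\Big)>0.$$
   Context: Network: $\mathcal I=\{1,\dots,I\}$, $\mathcal J=\{1,\dots,J\}$, edges $\mathcal E\subset\mathcal I\times\mathcal J$ with the bipartite graph $\mathcal G=(\mathcal I\cup\mathcal J,\mathcal E)$ a tree; $\mathbb R^{\mathcal G}$ denotes arrays in $\mathbb R^{I\times J}$ vanishing off $\mathcal E$. For each $n$, service rates $\mu^n_{ij}>0$ for $(i,j)\in\mathcal E$; $\mathcal J(i)=\{j:(i,j)\in\mathcal E\}$. Let $\mathcal D=\{(\alpha,\beta)\in\mathbb R^I\times\mathbb R^J:\sum_i\alpha_i=\sum_j\beta_j\}$ and $\Psi:\mathcal D\to\mathbb R^{\mathcal G}$ the unique linear map with $\sum_j\Psi_{ij}(\alpha,\beta)=\alpha_i$, $\sum_i\Psi_{ij}(\alpha,\beta)=\beta_j$. For $(\hat\imath,\hat\jmath)\in\mathcal E$, $B^n_1\in\mathbb R^{I\times I}$ and $B^n_2\in\mathbb R^{I\times J}$ are the unique matrices with column $\hat\jmath$ of $B^n_2$ zero and $\sum_{j\in\mathcal J(i)}\mu^n_{ij}\Psi_{ij}(\alpha,\beta)=(B^n_1\alpha+B^n_2\beta)_i$ for all $i$ and $(\alpha,\beta)\in\mathcal D$ ($B^n_1$ is invertible). $e$ is the all-ones vector and $\Delta_J=\{u\in\mathbb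 R^J_+:\langle e,u\rangle=1\}$. *)

From HB Require Import structures.
From mathcomp Require Import all_boot all_order all_algebra.
From mathcomp Require Import reals.
Set Implicit Arguments. Unset Strict Implicit. Unset Printing Implicit Defensive.
Import Order.TTheory GRing.Theory Num.Theory.
Local Open Scope ring_scope.

Definition bip_adj (I J : nat) (E : {set 'I_I * 'I_J}) : rel ('I_I + 'I_J) :=
  fun x y => match x, y with
             | inl i, inr j => (i, j) \in E
             | inr j, inl i => (i, j) \in E
             | _, _ => false
             end.

Definition is_tree (I J : nat) (E : {set 'I_I * 'I_J}) : Prop :=
  (forall x y : 'I_I + 'I_J, connect (bip_adj E) x y) /\ #|E| = (I + J).-1.

Definition in_RG (R : ringType) (I J : nat) (E : {set 'I_I * 'I_J})
  (x : 'M[R]_(I, J)) : Prop := forall i j, (i, j) \notin E -> x i j = 0.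

Definition in_D (R : ringType) (I J : nat) (a : 'cV[R]_I) (b : 'cV[R]_J) : Prop :=
  \sum_i a i 0 = \sum_j b j 0.

(* x = Psi(alpha, beta): x in R^G with row sums alpha and column sums beta
   (Psi is the unique such map since G is a tree). *)
Definition is_Psi (R : ringType) (I J : nat) (E : {set 'I_I * 'I_J})
  (a : 'cV[R]_I) (b : 'cV[R]_J) (x : 'M[R]_(I, J)) : Prop :=
  [/\ in_RG E x, forall i, \sum_j x i j = a i 0 & forall j, \sum_i x i j = b j 0].

(* B1, B2 are the matrices associated with (ihat, jhat): column jhat of B2
   is zero, and sum_{j in J(i)} mu_ij Psi_ij(alpha,beta) = (B1 alpha + B2 beta)_i
   for all i and (alpha,beta) in D. *)
Definition is_B_pair (R : ringType) (I J : nat) (E : {set 'I_I * 'I_J})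
  (mu : 'M[R]_(I, J)) (jh : 'I_J) (B1 : 'M[R]_I) (B2 : 'M[R]_(I, J)) : Prop :=
  (forall i, B2 i jh = 0) /\
  (forall (a : 'cV[R]_I) (b : 'cV[R]_J) (x : 'M[R]_(I, J)),
     in_D a b -> is_Psi E a b x ->
     forall i, \sum_(j | (i, j) \in E) mu i j * x i j = (B1 *m a + B2 *m b) i 0).

Definition in_simplex (R : numDomainType) (J : nat) (u : 'cV[R]_J) : Prop :=
  (forall j, 0 <= u j 0) /\ \sum_j u j 0 = 1.

From HB Require Import structures.
From mathcomp Require Import all_boot all_order all_algebra.
From mathcomp Require Import reals.
Import Order.TTheory GRing.Theory Num.Theory.
Local Open Scope ring_scope.

(* Let r := e^T B1^{-1} (so r B1 = e^T) and q_j := 1 + (r B2)_j.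
   Then  1 + <e, B1^{-1} B2 u> = sum_j q_j u_j, so it suffices to show that
   every q_j is positive: on the simplex the sum is then at least min_j q_j > 0.
   1. Testing the defining identity of (B1, B2) on the pair of unit vectors
      (e_i, e_j) for an edge (i, j), whose Psi is the unit matrix E_ij, shows
      col_i B1 + col_j B2 = mu_ij e_i.
   2. Hence q_j = r_i mu_ij along every edge, and q_jhat = 1 because column
      jhat of B2 vanishes.
   3. As mu > 0 on edges, positivity of these vertex weights propagates along
      edges; the tree is connected, so every q_j is positive.
   4. A positive weighted sum is bounded below on the simplex by its least
      weight. *)

Lemma sum_delta_mx_row (R : pzSemiRingType) (m n : nat) (i : 'I_m) (j : 'I_n)
    (i' : 'I_m) :
  \sum_k (delta_mx i j : 'M[R]_(m, n)) i' k = (i' == i)%:R.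
Proof.
rewrite (bigD1 j) //= big1 ?addr0 => [|k /negPf nkj]; last first.
  by rewrite mxE nkj andbF.
by rewrite mxE eqxx andbT.
Qed.

Lemma sum_delta_mx_col (R : pzSemiRingType) (m n : nat) (i : 'I_m) (j : 'I_n)
    (j' : 'I_n) :
  \sum_k (delta_mx i j : 'M[R]_(m, n)) k j' = (j' == j)%:R.
Proof.
rewrite (bigD1 i) //= big1 ?addr0 => [|k /negPf nki]; last by rewrite mxE nki.
by rewrite mxE eqxx.
Qed.

Lemma delta_in_D (R : nzRingType) {I J : nat} (i : 'I_I) (j : 'I_J) :
  in_D (delta_mx i 0 : 'cV[R]_I) (delta_mx j 0 : 'cV[R]_J).
Proof. by rewrite /in_D !sum_delta_mx_col. Qed.

Lemma delta_is_Psi (R : nzRingType) {I J : nat} {E : {set 'I_I * 'I_J}}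
    {i : 'I_I} {j : 'I_J} :
  (i, j) \in E ->
  is_Psi E (delta_mx i 0 : 'cV[R]_I) (delta_mx j 0 : 'cV[R]_J) (delta_mx i j).
Proof.
move=> Eij; split=> [i' j' nE|i'|j']; last 2 first.
- by rewrite sum_delta_mx_row mxE andbT.
- by rewrite sum_delta_mx_col mxE andbT.
rewrite mxE; case: eqP nE => [-> |//]; case: eqP => [-> |//].
by rewrite Eij.
Qed.

Lemma B_pair_edge {R : nzRingType} {I J : nat} {E : {set 'I_I * 'I_J}}
    {mu : 'M[R]_(I, J)} {jh : 'I_J} {B1 : 'M[R]_I} {B2 : 'M[R]_(I, J)}
    {i : 'I_I} {j : 'I_J} :
  is_B_pair E mu jh B1 B2 -> (i, j) \in E ->
  forall i', B1 i' i + B2 i' j = (i' == i)%:R * mu i j.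
Proof.
move=> [_ HB] Eij i'.
have := HB _ _ _ (delta_in_D R i j) (delta_is_Psi R Eij) i'.
rewrite mxE -!colE !mxE => <-.
have [-> | ne] := eqVneq i' i; last first.
  by rewrite mul0r big1 // => k _; rewrite mxE (negPf ne) mulr0.
rewrite mul1r (bigD1 j) //= big1 ?addr0 => [|k /andP[_ /negPf nkj]]; last first.
  by rewrite mxE nkj andbF mulr0.
by rewrite mxE !eqxx mulr1.
Qed.

Lemma connected_weights_pos {R : numDomainType} {I J : nat}
    {E : {set 'I_I * 'I_J}} {mu : 'M[R]_(I, J)} {p : 'I_I -> R}
    {q : 'I_J -> R} {j0 : 'I_J} :
  (forall x y : 'I_I + 'I_J, connect (bip_adj E) x y) ->
  (forall i j, (i, j) \in E -> 0 < mu i j) ->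
  (forall i j, (i, j) \in E -> q j = p i * mu i j) ->
  0 < q j0 -> forall j, 0 < q j.
Proof.
move=> conn mu_pos qp q0 j.
pose pos : pred ('I_I + 'I_J) :=
  fun v => match v with inl i => 0 < p i | inr j => 0 < q j end.
have pos_closed : closed (bip_adj E) pos.
  by move=> [x|x] [y|y] //= Exy; rewrite !unfold_in /= (qp _ _ Exy)
    pmulr_lgt0 ?mu_pos.
have := closed_connect pos_closed (conn (inr j0) (inr j)).
by rewrite !unfold_in /= q0.
Qed.

Lemma simplex_weighted_sum_lb {R : realDomainType} {J : nat} {q : 'I_J -> R} :
  (forall j, 0 < q j) ->
  exists2 c : R, 0 < c &
    forall u : 'cV[R]_J, in_simplex u -> c <= \sum_j q j * u j 0.
Proof.
move=> q_pos; exists (\big[Num.min/1]_j q j).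
  by apply: (big_ind (fun x => 0 < x)) => // x y x0 y0; rewrite lt_min x0.
move=> u [u_ge0 u_sum1]; rewrite -[X in X <= _]mulr1 -u_sum1 mulr_sumr.
apply: ler_sum => j _; rewrite mulrC [q j * _]mulrC ler_wpM2l ?u_ge0 //.
by rewrite (bigD1 j) //= ge_min lexx.
Qed.

Section ColumnWeights.

Context {R : realType} {I J : nat} {E : {set 'I_I * 'I_J}}.
Context {mu : 'M[R]_(I, J)} {jh : 'I_J}.
Variables (B1 : 'M[R]_I) (B2 : 'M[R]_(I, J)).
Hypotheses (HB : is_B_pair E mu jh B1 B2) (unitB1 : B1 \in unitmx).

Definition row_weight : 'rV[R]_I := const_mx 1 *m invmx B1.
Definition col_weight (j : 'I_J) : R := 1 + (row_weight *m B2) 0 j.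

Lemma col_weight_sum (u : 'cV[R]_J) : \sum_j u j 0 = 1 ->
  1 + \sum_i (invmx B1 *m B2 *m u) i 0 = \sum_j col_weight j * u j 0.
Proof.
move=> u_sum1.
have -> : \sum_i (invmx B1 *m B2 *m u) i 0 = (row_weight *m B2 *m u) 0 0.
  rewrite /row_weight -!mulmxA mxE; apply: eq_bigr => i _.
  by rewrite [const_mx 1 0 i]mxE mul1r.
rewrite mxE -{1}u_sum1 -big_split /=; apply: eq_bigr => j _.
by rewrite mulrDl mul1r.
Qed.

Lemma col_weight_edge (i : 'I_I) (j : 'I_J) :
  (i, j) \in E -> col_weight j = row_weight 0 i * mu i j.
Proof.
move=> Eij.
have r_B1 : row_weight *m B1 = const_mx 1 by rewrite -mulmxA mulVmx ?mulmx1.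
rewrite /col_weight.
have -> : 1 = (row_weight *m B1) 0 i by rewrite r_B1 mxE.
rewrite [(_ *m B1) 0 i]mxE [(_ *m B2) 0 j]mxE -big_split /=.
rewrite (bigD1 i) //= big1 ?addr0.
  by rewrite -mulrDr (B_pair_edge HB Eij) eqxx mul1r.
by move=> k nki; rewrite -mulrDr (B_pair_edge HB Eij) (negPf nki) mul0r mulr0.
Qed.

Lemma col_weight_jh : col_weight jh = 1.
Proof.
by case: HB => B2_jh _; rewrite /col_weight mxE big1 ?addr0 // => k _;
  rewrite B2_jh mulr0.
Qed.

End ColumnWeights.

Arguments col_weight_edge {R I J E mu jh B1 B2}.
Arguments col_weight_jh {R I J E mu jh B1 B2}.

Theorem corollary2 (R : realType) (I J : nat) (E : {set 'I_I * 'I_J})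
  (mu : 'M[R]_(I, J)) (ih : 'I_I) (jh : 'I_J)
  (B1 : 'M[R]_I) (B2 : 'M[R]_(I, J)) :
  is_tree E ->
  (forall i j, (i, j) \in E -> 0 < mu i j) ->
  (ih, jh) \in E ->
  is_B_pair E mu jh B1 B2 ->
  B1 \in unitmx ->
  exists2 c : R, 0 < c &
    forall u : 'cV[R]_J, in_simplex u ->
      c <= 1 + \sum_i (invmx B1 *m B2 *m u) i 0.
Proof.
move=> [conn _] mu_pos _ HB unitB1.
have q_jh_pos : 0 < col_weight B1 B2 jh by rewrite (col_weight_jh HB) ltr01.
have q_pos := connected_weights_pos conn mu_pos (col_weight_edge HB unitB1) q_jh_pos.
have [c c_pos c_lb] := simplex_weighted_sum_lb q_pos.
exists c => // u u_simplex; have [_ u_sum1] := u_simplex.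
by rewrite (col_weight_sum B1 B2 u u_sum1); apply: c_lb.
Qed.
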